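(* Let $X$ be a topological space. The following are equivalent: (1) $\tau_\omega=\tau_\Gamma$ on $C(X)$; (2) for every $\epsilon\in LSC(X,(0,1))$ there is a continuous $\eta:X\to(0,1)$ with $\eta(x)\le\epsilon(x)$ for every $x\in X$.
   Context: $C(X)$ is the set of continuous real-valued functions on $X$, each identified with its graph in $X\times\mathbb{R}$. The graph topology $\tau_\Gamma$ on $C(X)$ has base $\{F_G: G\text{ open in }X\times\mathbb{R}\}$ where $F_G=\{f\in C(X): f\subset G\}$. $LSC(X,(0,1))$ is the set of lower semicontinuous functions $X\to(0,1)$. The fine (Whitney) topology $\tau_\omega$ on $C(X)$ is the topology with base consisting of all sets $\{g\in C(X): |f(x)-g(x)|<\eta(x)\ \forall x\in X\}$, where $f\in C(X)$ and $\eta:X\to(0,1)$ is continuous. *)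

From Stdlib Require Import Reals.
Open Scope R_scope.

Record topology (X : Type) := {
  is_open : (X -> Prop) -> Prop;
  open_full : is_open (fun _ => True);
  open_inter : forall U V, is_open U -> is_open V -> is_open (fun x => U x /\ V x);
  open_union : forall F : (X -> Prop) -> Prop,
      (forall U, F U -> is_open U) -> is_open (fun x => exists U, F U /\ U x)
}.
Arguments is_open {X} t U.

Definition R_open (V : R -> Prop) : Prop :=
  forall t, V t -> exists r, 0 < r /\ forall s, Rabs (s - t) < r -> V s.

Definition prod_open {X : Type} (T : topology X) (G : X -> R -> Prop) : Prop :=
  forall x t, G x t -> exists U r, is_open T U /\ U x /\ 0 < r /\
    forall y s, U y -> Rabs (s - t) < r -> G y s.

Definition continuous {X : Type} (T : topology X) (f : X -> R) : Prop :=
  forall V, R_open V -> is_open T (fun x => V (f x)).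

Definition lsc {X : Type} (T : topology X) (f : X -> R) : Prop :=
  forall t, is_open T (fun x => t < f x).

(* Subsets of C(X) are represented as predicates on X -> R; only their
   values on continuous functions matter. *)

(* Graph topology tau_Gamma: W is open iff every f in W (f in C(X)) lies in
   some basic set F_G = {g in C(X) | g subset G} contained in W, G open in X x R. *)
Definition graph_open {X : Type} (T : topology X) (W : (X -> R) -> Prop) : Prop :=
  forall f, continuous T f -> W f ->
    exists G, prod_open T G /\ (forall x, G x (f x)) /\
      forall g, continuous T g -> (forall x, G x (g x)) -> W g.

(* Fine (Whitney) topology tau_omega: base sets
   B(h, eta) = {g in C(X) | forall x, |h x - g x| < eta x},
   h in C(X), eta : X -> (0,1) continuous. *)
Definition fine_open {X : Type} (T : topology X) (W : (X -> R) -> Prop) : Prop :=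
  forall f, continuous T f -> W f ->
    exists h eta, continuous T h /\ continuous T eta /\
      (forall x, 0 < eta x < 1) /\
      (forall x, Rabs (h x - f x) < eta x) /\
      forall g, continuous T g -> (forall x, Rabs (h x - g x) < eta x) -> W g.

From Stdlib Require Import Reals Lra Classical FunctionalExtensionality PropExtensionality.
Open Scope R_scope.

(* The key geometric fact is that a "strip" {(x,s) | lo x < s < hi x} is open
   in X x R when lo is upper and hi is lower semicontinuous (strip_open).
   - Fine-open sets are always graph-open: a fine ball B(h, eta) is exactly
     the set of continuous functions whose graph lies in the strip between
     h - eta and h + eta (fine_graph_open).
   - (1) => (2): for lsc eps, the band {g | |g| < eps} is graph-open (its
     strip is open), hence fine-open; a fine ball around 0 inside it of radius
     eta forces eta/2 <= eps (band_graph_open, minorant_of_fine_band).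
   - (2) => (1): for a graph-open W containing f with G around the graph of f,
     the supremum of the radii of tubes around f locally contained in G is an
     lsc function (graph_radius); a continuous minorant eta of it gives a fine
     ball B(f, eta) inside W (graph_open_fine). *)

Ltac solve_abs := repeat split_Rabs; lra.

Lemma open_ext {X : Type} (T : topology X) (P Q : X -> Prop) :
  (forall x, P x <-> Q x) -> is_open T P -> is_open T Q.
Proof.
  intros HPQ HP. replace Q with P; [exact HP|].
  apply functional_extensionality; intro x.
  apply propositional_extensionality; apply HPQ.
Qed.

Lemma open_local {X : Type} (T : topology X) (P : X -> Prop) :
  (forall x, P x -> exists U, is_open T U /\ U x /\ forall y, U y -> P y) ->
  is_open T P.
Proof.
  intros Hloc.
  apply (open_ext T (fun x => exists U, (is_open T U /\ forall y, U y -> P y) /\ U x)).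
  - intro x; split.
    + intros [U [[_ HUP] Ux]]; auto.
    + intros Px; destruct (Hloc x Px) as [U [HU [Ux HUP]]]; exists U; auto.
  - apply open_union. intros U [HU _]; exact HU.
Qed.

Definition usc {X : Type} (T : topology X) (f : X -> R) : Prop :=
  forall t, is_open T (fun x => f x < t).

Lemma continuous_ball {X : Type} (T : topology X) (f : X -> R) :
  continuous T f -> forall x r, 0 < r ->
  exists U, is_open T U /\ U x /\ forall y, U y -> Rabs (f y - f x) < r.
Proof.
  intros Hf x r Hr. exists (fun y => Rabs (f y - f x) < r). split; [|split].
  - apply (Hf (fun s => Rabs (s - f x) < r)). intros t Ht.
    exists (r - Rabs (t - f x)); split; [lra|]. intros s Hs. solve_abs.
  - solve_abs.
  - auto.
Qed.

Lemma continuous_of_balls {X : Type} (T : topology X) (f : X -> R) :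
  (forall x r, 0 < r ->
     exists U, is_open T U /\ U x /\ forall y, U y -> Rabs (f y - f x) < r) ->
  continuous T f.
Proof.
  intros Hball V HV. apply open_local. intros x Vx.
  destruct (HV _ Vx) as [r [Hr HrV]].
  destruct (Hball x r Hr) as [U [HU [Ux HUr]]].
  exists U; repeat split; auto.
Qed.

Lemma continuous_const {X : Type} (T : topology X) (c : R) :
  continuous T (fun _ => c).
Proof.
  apply continuous_of_balls. intros x r Hr. exists (fun _ => True).
  split; [apply open_full|]. split; auto. intros; solve_abs.
Qed.

Lemma continuous_plus {X : Type} (T : topology X) (f g : X -> R) :
  continuous T f -> continuous T g -> continuous T (fun x => f x + g x).
Proof.
  intros Hf Hg. apply continuous_of_balls. intros x r Hr.
  destruct (continuous_ball T f Hf x (r/2)) as [U1 [H1 [U1x H1']]]; [lra|].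
  destruct (continuous_ball T g Hg x (r/2)) as [U2 [H2 [U2x H2']]]; [lra|].
  exists (fun y => U1 y /\ U2 y). split; [apply open_inter; auto|]. split; auto.
  intros y [a b]. specialize (H1' y a). specialize (H2' y b). solve_abs.
Qed.

Lemma continuous_scal {X : Type} (T : topology X) (c : R) (f : X -> R) :
  continuous T f -> continuous T (fun x => c * f x).
Proof.
  intros Hf. apply continuous_of_balls. intros x r Hr.
  assert (Hc : 0 < Rabs c + 1) by (pose proof (Rabs_pos c); lra).
  destruct (continuous_ball T f Hf x (r / (Rabs c + 1))) as [U [HU [Ux HUr]]].
  { apply Rdiv_lt_0_compat; lra. }
  exists U; repeat split; auto. intros y Uy. specialize (HUr y Uy).
  replace (c * f y - c * f x) with (c * (f y - f x)) by ring.
  rewrite Rabs_mult.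
  apply Rle_lt_trans with ((Rabs c + 1) * Rabs (f y - f x)).
  - apply Rmult_le_compat_r; [apply Rabs_pos|lra].
  - apply Rmult_lt_reg_l with (/ (Rabs c + 1)).
    + apply Rinv_0_lt_compat; lra.
    + rewrite <- Rmult_assoc, Rinv_l by lra. unfold Rdiv in HUr. lra.
Qed.

Lemma continuous_lsc {X : Type} (T : topology X) (f : X -> R) :
  continuous T f -> lsc T f.
Proof.
  intros Hf t. apply (Hf (fun s => t < s)). intros s Hs.
  exists (s - t); split; [lra|]. intros u Hu. solve_abs.
Qed.

Lemma continuous_usc {X : Type} (T : topology X) (f : X -> R) :
  continuous T f -> usc T f.
Proof.
  intros Hf t. apply (Hf (fun s => s < t)). intros s Hs.
  exists (t - s); split; [lra|]. intros u Hu. solve_abs.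
Qed.

Lemma strip_open {X : Type} (T : topology X) (lo hi : X -> R) :
  usc T lo -> lsc T hi -> prod_open T (fun x s => lo x < s < hi x).
Proof.
  intros Hlo Hhi x t [Hlt Hth].
  set (d := Rmin (t - lo x) (hi x - t) / 2).
  assert (Hd : 0 < d) by (unfold d; apply Rmin_case; lra).
  assert (Hd1 : d < t - lo x) by (unfold d; pose proof (Rmin_l (t - lo x) (hi x - t)); lra).
  assert (Hd2 : d < hi x - t) by (unfold d; pose proof (Rmin_r (t - lo x) (hi x - t)); lra).
  exists (fun y => lo y < t - d /\ t + d < hi y), d.
  split; [apply open_inter; [apply Hlo | apply Hhi]|].
  split; [split; lra|]. split; [exact Hd|].
  intros y s [Hy1 Hy2] Hs. solve_abs.
Qed.

(* Fine-open sets are graph-open: the fine ball B(h, eta) is the set of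
   continuous functions whose graph lies in the strip around h of width eta. *)
Lemma fine_graph_open {X : Type} (T : topology X) (W : (X -> R) -> Prop) :
  fine_open T W -> graph_open T W.
Proof.
  intros HW f Hf Wf.
  destruct (HW f Hf Wf) as [h [eta [Hh [Heta [_ [Hhf Hball]]]]]].
  assert (Hlo : continuous T (fun x => h x + -1 * eta x))
    by (apply continuous_plus; [|apply continuous_scal]; auto).
  assert (Hhi : continuous T (fun x => h x + 1 * eta x))
    by (apply continuous_plus; [|apply continuous_scal]; auto).
  exists (fun x s => h x + -1 * eta x < s < h x + 1 * eta x). split; [|split].
  - apply strip_open; [apply continuous_usc | apply continuous_lsc]; auto.
  - intro x. specialize (Hhf x). solve_abs.
  - intros g Hg Gg. apply Hball; auto. intro x. specialize (Gg x). solve_abs.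
Qed.

Definition band {X : Type} (eps : X -> R) (g : X -> R) : Prop :=
  forall x, Rabs (g x) < eps x.

(* For eps lower semicontinuous, the band is graph-open: its graph region is
   the strip between -eps and eps. *)
Lemma band_graph_open {X : Type} (T : topology X) (eps : X -> R) :
  lsc T eps -> graph_open T (band eps).
Proof.
  intros Heps f _ Bf.
  exists (fun x s => - eps x < s < eps x). split; [|split].
  - apply strip_open; [|exact Heps].
    intro t. apply (open_ext T (fun x => - t < eps x)); [intro x; lra|apply Heps].
  - intro x. specialize (Bf x). solve_abs.
  - intros g _ Gg x. specialize (Gg x). solve_abs.
Qed.

(* If a positive band is fine-open, then the fine ball B(h, eta) around 0 that
   it contains has h + eta/2 and h - eta/2 in the band, whence eta/2 <= eps. *)
Lemma minorant_of_fine_band {X : Type} (T : topology X) (eps : X -> R) :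
  (forall x, 0 < eps x) -> fine_open T (band eps) ->
  exists eta : X -> R, continuous T eta /\ (forall x, 0 < eta x < 1) /\
    forall x, eta x <= eps x.
Proof.
  intros Hpos Hfine.
  assert (B0 : band eps (fun _ => 0)) by (intro x; rewrite Rabs_R0; apply Hpos).
  destruct (Hfine (fun _ => 0) (continuous_const T 0) B0)
    as [h [eta [Hh [Heta [Hrange [_ Hball]]]]]].
  assert (Hshift : forall c, -1 < c < 1 -> band eps (fun y => h y + c * eta y)).
  { intros c Hc. apply Hball.
    - apply continuous_plus; [|apply continuous_scal]; auto.
    - intro y. specialize (Hrange y).
      replace (h y - (h y + c * eta y)) with (- (c * eta y)) by ring.
      rewrite Rabs_Ropp, Rabs_mult, (Rabs_pos_eq (eta y)) by lra.
      assert (Rabs c < 1) by solve_abs. pose proof (Rabs_pos c). nra. }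
  exists (fun x => /2 * eta x). split; [apply continuous_scal; exact Heta|].
  split; [intro x; specialize (Hrange x); lra|].
  intro x.
  assert (Hup : Rabs (h x + /2 * eta x) < eps x) by (apply (Hshift (/2)); lra).
  assert (Hdown : Rabs (h x + -/2 * eta x) < eps x) by (apply (Hshift (-/2)); lra).
  solve_abs.
Qed.

(* For a continuous f whose graph lies in an open G, the sup of the radii of
   tubes around f that are locally contained in G. *)
Section GraphRadius.

Variables (X : Type) (T : topology X) (f : X -> R) (G : X -> R -> Prop).

(* r is admissible at x if some neighbourhood U of x carries the r-tube
   around f inside G; radii are capped at 1/2 to keep the sup below 1. *)
Definition admissible_radius (x : X) (r : R) : Prop :=
  0 < r /\ r <= 1/2 /\ exists U, is_open T U /\ U x /\
    forall y s, U y -> Rabs (s - f y) < r -> G y s.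

Lemma admissible_radius_bounded (x : X) : bound (admissible_radius x).
Proof. exists (1/2). intros r [_ [Hr _]]; exact Hr. Qed.

Hypothesis f_continuous : continuous T f.
Hypothesis G_open : prod_open T G.
Hypothesis graph_in_G : forall x, G x (f x).

(* Openness of G at (x, f x) together with continuity of f at x yields an
   admissible radius. *)
Lemma admissible_radius_exists (x : X) : exists r, admissible_radius x r.
Proof.
  destruct (G_open x (f x) (graph_in_G x)) as [U0 [r0 [HU0 [U0x [Hr0 HG0]]]]].
  destruct (continuous_ball T f f_continuous x (r0/2)) as [U1 [H1 [U1x Hf1]]]; [lra|].
  exists (Rmin (r0/2) (1/2)). split; [apply Rmin_pos; lra|].
  split; [apply Rmin_r|].
  exists (fun y => U0 y /\ U1 y). split; [apply open_inter; auto|]. split; auto.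
  intros y s [a b] Hs. apply HG0; auto. specialize (Hf1 y b).
  pose proof (Rmin_l (r0/2) (1/2)). solve_abs.
Qed.

Definition graph_radius (x : X) : R :=
  proj1_sig (completeness (admissible_radius x)
               (admissible_radius_bounded x) (admissible_radius_exists x)).

Lemma graph_radius_lub (x : X) : is_lub (admissible_radius x) (graph_radius x).
Proof. unfold graph_radius. destruct completeness as [l Hl]; exact Hl. Qed.

Lemma graph_radius_approx (x : X) (t : R) :
  t < graph_radius x -> exists r, admissible_radius x r /\ t < r.
Proof.
  intros Ht. apply NNPP. intro Hnone.
  assert (Hub : is_upper_bound (admissible_radius x) t).
  { intros r Hr. apply Rnot_lt_le. intro Hlt. apply Hnone. exists r; auto. }
  pose proof (proj2 (graph_radius_lub x) t Hub). lra.
Qed.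

(* An admissible radius at x, witnessed by U, is admissible at all of U. *)
Lemma graph_radius_lsc : lsc T graph_radius.
Proof.
  intro t. apply open_local. intros x Hx.
  destruct (graph_radius_approx x t Hx) as [r [[Hr0 [Hr1 [U [HU [Ux HUG]]]]] Htr]].
  exists U. repeat split; auto. intros y Uy.
  assert (Hadm : admissible_radius y r) by (repeat split; auto; exists U; auto).
  pose proof (proj1 (graph_radius_lub y) r Hadm). lra.
Qed.

Lemma graph_radius_range (x : X) : 0 < graph_radius x < 1.
Proof.
  destruct (admissible_radius_exists x) as [r Hr].
  pose proof (proj1 (graph_radius_lub x) r Hr).
  assert (graph_radius x <= 1/2).
  { apply (proj2 (graph_radius_lub x)). intros r' [_ [Hr' _]]; exact Hr'. }
  destruct Hr as [Hr0 _]. lra.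
Qed.

Lemma graph_radius_tube (x : X) (s : R) :
  Rabs (s - f x) < graph_radius x -> G x s.
Proof.
  intros Hs.
  destruct (graph_radius_approx x _ Hs) as [r [[_ [_ [U [_ [Ux HUG]]]]] Hr]].
  apply HUG; auto.
Qed.

End GraphRadius.

(* Under the minorant property, graph-open sets are fine-open: the fine ball
   around f with radius a continuous minorant of graph_radius lies in W. *)
Lemma graph_open_fine {X : Type} (T : topology X) (W : (X -> R) -> Prop) :
  (forall eps : X -> R, lsc T eps -> (forall x, 0 < eps x < 1) ->
     exists eta : X -> R, continuous T eta /\ (forall x, 0 < eta x < 1) /\
       forall x, eta x <= eps x) ->
  graph_open T W -> fine_open T W.
Proof.
  intros Hminorant HW f Hf Wf. destruct (HW f Hf Wf) as [G [HG [Gf HGW]]].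
  destruct (Hminorant (graph_radius X T f G Hf HG Gf)
              (graph_radius_lsc X T f G Hf HG Gf) (graph_radius_range X T f G Hf HG Gf))
    as [eta [Heta [Hrange Hle]]].
  exists f, eta. split; [exact Hf|]. split; [exact Heta|]. split; [exact Hrange|].
  split.
  - intro x. replace (f x - f x) with 0 by ring. rewrite Rabs_R0. apply Hrange.
  - intros g Hg Hfg. apply HGW; auto. intro x.
    apply (graph_radius_tube X T f G Hf HG Gf).
    rewrite Rabs_minus_sym. specialize (Hfg x). specialize (Hle x). lra.
Qed.

Theorem proposition1p2 (X : Type) (T : topology X) :
  (forall W : (X -> R) -> Prop, fine_open T W <-> graph_open T W) <->
  (forall eps : X -> R, lsc T eps -> (forall x, 0 < eps x < 1) ->
     exists eta : X -> R, continuous T eta /\ (forall x, 0 < eta x < 1) /\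
       forall x, eta x <= eps x).
Proof.
  split.
  - intros Hequal eps Hlsc Hrange.
    apply minorant_of_fine_band; [intro x; apply Hrange|].
    apply Hequal, band_graph_open, Hlsc.
  - intros Hminorant W. split.
    + apply fine_graph_open.
    + apply graph_open_fine, Hminorant.
Qed.
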